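(* Let $A\in\{0,1,-1\}^{m\times n}$ be such that $G_A$ is a $t$-left-regular $(\gamma,\mu)$-unique expander, and let $s_{\max}$ be the maximum degree of a right vertex of $G_A$. Then for any $p\ge1$, $\delta_1>0$, $\delta_2\in(0,1)$, and every $\gamma n$-sparse $x\in\mathbb{R}^n$, $$\|Ax\|_p^p\ge\left(\frac{t(1-\mu)}{(1+\delta_1)^{p-1}}-\frac{\mu t}{\delta_1^{p-1}}(s_{\max}-1)^{p-1}\right)\|x\|_p^p,$$ $$\|Ax\|_p^p\le\left(\frac{t}{(1-\delta_2)^{p-1}}+\frac{\mu t}{\delta_2^{p-1}}(s_{\max}-1)^{p-1}\right)\|x\|_p^p.$$
   Context: $G_A=(V_L=[n],V_R=[m],E)$ is the bipartite graph with an edge $\{u,r\}$ iff $A_{r,u}\ne0$. It is a $t$-left-regular $(\gamma,\mu)$-unique expander if every left vertex has degree $t$ and every $S\subseteq V_L$ with $|S|\le\gamma n$ has at least $t(1-\mu)|S|$ right vertices with exactly one neighbor in $S$. A vector is $k$-sparse if it has at most $k$ nonzero coordinates. *)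

From HB Require Import structures.
From mathcomp Require Import all_boot all_order all_algebra.
From mathcomp Require Import all_classical all_reals all_analysis.
Set Implicit Arguments. Unset Strict Implicit. Unset Printing Implicit Defensive.
Import Order.TTheory GRing.Theory Num.Theory.
Local Open Scope ring_scope.

(* Bipartite graph G_A: left vertices 'I_n (columns), right vertices 'I_m (rows),
   edge {u, r} iff A r u != 0. *)

Definition left_nbhd (R : ringType) m n (A : 'M[R]_(m, n)) (u : 'I_n) : {set 'I_m} :=
  [set r | A r u != 0].

Definition right_nbhd (R : ringType) m n (A : 'M[R]_(m, n)) (r : 'I_m) : {set 'I_n} :=
  [set u | A r u != 0].

Definition sign_matrix (R : ringType) m n (A : 'M[R]_(m, n)) : Prop :=
  forall r u, A r u = 0 \/ A r u = 1 \/ A r u = -1.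

Definition left_regular (R : ringType) m n (A : 'M[R]_(m, n)) (t : nat) : Prop :=
  forall u, #|left_nbhd A u| = t.

Definition unique_nbrs (R : ringType) m n (A : 'M[R]_(m, n)) (S : {set 'I_n}) : {set 'I_m} :=
  [set r | #|right_nbhd A r :&: S| == 1%N].

Definition unique_expander (R : realType) m n (A : 'M[R]_(m, n)) (t : nat) (gamma mu : R) : Prop :=
  left_regular A t /\
  forall S : {set 'I_n}, (#|S|%:R <= gamma * n%:R) ->
    t%:R * (1 - mu) * #|S|%:R <= #|unique_nbrs A S|%:R.

Definition smax (R : ringType) m n (A : 'M[R]_(m, n)) : nat :=
  \max_(r : 'I_m) #|right_nbhd A r|.

Definition sparse (R : realType) n (k : R) (x : 'cV[R]_n) : Prop :=
  #|[set i | x i 0 != 0]|%:R <= k.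

Definition lp_pow (R : realType) n (p : R) (x : 'cV[R]_n) : R :=
  \sum_(i < n) (`|x i 0| `^ p).

(* Order the support S of x by |x_u|, ties broken by index.  In row r, the
   largest neighbour in S is leading and the others are dominated, so
   (Ax)_r = a_r + b_r where |a_r|^p is the weight |x_u|^p of the leading
   neighbour and, by the power-mean inequality,
   |b_r|^p <= (s_max - 1)^(p-1) * (weight of the dominated neighbours).
   The convexity bound (a + b)^p <= (al + be)^(p-1) (a^p / al^(p-1) + b^p / be^(p-1)),
   used with (al, be) = (1, d1) and (1 - d2, d2), bounds |(Ax)_r|^p on both
   sides.  Summing over the rows, u is dominated in dom_deg u of its t rows and
   leading in the others, so it remains to show
   sum_u dom_deg u |x_u|^p <= mu t ||x||_p^p.  For T a subset of S, a unique
   neighbour of T dominates nothing, so unique expansion gives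
   sum_(u in T) dom_deg_T u <= mu t |T|; Abel summation along the order
   (removing the smallest element does not change the other domination
   degrees) turns this into the weighted bound. *)

From mathcomp Require Import all_boot all_order all_algebra.
From mathcomp Require Import all_classical all_reals all_analysis.
From mathcomp Require Import ring lra.
Import Order.TTheory GRing.Theory Num.Theory.
Set Implicit Arguments.
Unset Strict Implicit.
Unset Printing Implicit Defensive.

Local Open Scope ring_scope.

Section PowerInequalities.
Context {R : realType} {p : R} (p_ge1 : 1 <= p).
Let p_gt0 : 0 < p := lt_le_trans ltr01 p_ge1.
Let p_ge0 : 0 <= p := ltW p_gt0.

Lemma powRD_le_weighted {al be a b : R} :
  0 < al -> 0 < be -> 0 <= a -> 0 <= b ->
  (a + b) `^ p <= (al + be) `^ (p - 1) * (a `^ p / al `^ (p - 1) + b `^ p / be `^ (p - 1)).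
Proof.
move=> al_gt0 be_gt0 a_ge0 b_ge0.
set s := al + be; have s_gt0 : 0 < s by rewrite /s; lra.
set l := al / s.
have l_ge0 : 0 <= l by rewrite divr_ge0 ?ltW.
have l_le1 : l <= 1 by rewrite ler_pdivrMr // mul1r /s; lra.
have l_compl : 1 - l = be / s by rewrite /l /s; field; lra.
have scaled_powR c e : 0 < e -> 0 <= c -> e * (c / e) `^ p = c `^ p / e `^ (p - 1).
  move=> e_gt0 c_ge0; have e_ge0 := ltW e_gt0.
  rewrite powRM ?invr_ge0 // -[e^-1]powR_inv1 // -powRrM mulN1r powRN.
  rewrite -(mulr_powRB1 e_ge0 p_gt0).
  by rewrite invfM mulrCA mulVKf ?gt_eqF.
have convex : (l * (a / al) + (1 - l) * (b / be)) `^ p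
    <= l * (a / al) `^ p + (1 - l) * (b / be) `^ p.
  have := @convex_powR _ _ p_ge1 (Itv01 l_ge0 l_le1) (a / al) (b / be).
  by apply; rewrite inE /= in_itv /= andbT divr_ge0 // ltW.
have -> : a + b = s * (l * (a / al) + (1 - l) * (b / be)).
  by rewrite l_compl /l; field; lra.
have mean_ge0 : 0 <= l * (a / al) + (1 - l) * (b / be).
  by rewrite addr_ge0 // mulr_ge0 ?subr_ge0 // divr_ge0 // ltW.
rewrite powRM ?(ltW s_gt0) // -(mulr_powRB1 (ltW s_gt0) p_gt0) (mulrC s) -mulrA.
rewrite ler_pM2l ?powR_gt0 //.
apply: le_trans (ler_wpM2l (ltW s_gt0) convex) _.
have -> : s * (l * (a / al) `^ p + (1 - l) * (b / be) `^ p)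
    = al * (a / al) `^ p + be * (b / be) `^ p.
  by rewrite l_compl /l; field; lra.
by rewrite !scaled_powR.
Qed.

Lemma powR_normD_ge (a b : R) {d : R} : 0 < d ->
  `|a| `^ p / (1 + d) `^ (p - 1) - `|b| `^ p / d `^ (p - 1) <= `|a + b| `^ p.
Proof.
move=> d_gt0.
have := powRD_le_weighted ltr01 d_gt0 (normr_ge0 (a + b)) (normr_ge0 b).
rewrite powR1 divr1 => weighted.
have a_le : `|a| `^ p <= (`|a + b| + `|b|) `^ p.
  apply: ge0_ler_powR; rewrite ?nnegrE ?addr_ge0 //.
  by rewrite -{1}(addrK b a) ler_normB.
rewrite lerBlDr ler_pdivrMr ?powR_gt0 ?addr_gt0 // mulrC.
exact: le_trans a_le weighted.
Qed.

Lemma powR_normD_le (a b : R) {d : R} : 0 < d < 1 ->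
  `|a + b| `^ p <= `|a| `^ p / (1 - d) `^ (p - 1) + `|b| `^ p / d `^ (p - 1).
Proof.
move=> /andP[d_gt0 d_lt1]; have d_compl_gt0 : 0 < 1 - d by rewrite subr_gt0.
have := powRD_le_weighted d_compl_gt0 d_gt0 (normr_ge0 a) (normr_ge0 b).
rewrite subrK powR1 mul1r; apply: le_trans.
by apply: ge0_ler_powR; rewrite ?nnegrE ?addr_ge0 ?ler_normD.
Qed.

Lemma powR_norm_sum_le (I : Type) (s : seq I) (y : I -> R) :
  `|\sum_(i <- s) y i| `^ p <= (size s)%:R `^ (p - 1) * \sum_(i <- s) `|y i| `^ p.
Proof.
elim: s => [|i s IH]; first by rewrite !big_nil normr0 powR0 ?mulr0 // gt_eqF.
rewrite !big_cons; case: s IH => [|j s] IH.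
  by rewrite !big_nil !addr0 powR1 mul1r.
move: (j :: s) (isT : (0 < size (j :: s))%N) IH => {j}s s_pos IH.
have s_gt0 : 0 < (size s)%:R :> R by rewrite ltr0n.
have := powRD_le_weighted ltr01 s_gt0 (normr_ge0 (y i)) (normr_ge0 (\sum_(k <- s) y k)).
rewrite powR1 divr1 /= -add1n natrD => weighted.
apply: le_trans (_ : (`|y i| + `|\sum_(k <- s) y k|) `^ p <= _).
  by apply: ge0_ler_powR; rewrite ?nnegrE ?addr_ge0 ?ler_normD.
apply: (le_trans weighted).
rewrite ler_wpM2l ?powR_ge0 // lerD2l.
by rewrite ler_pdivrMr ?powR_gt0 // mulrC.
Qed.

End PowerInequalities.

Section Domination.
Variables (R : nzRingType) (m n : nat) (A : 'M[R]_(m, n)).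
Variables (disp : Order.disp_t) (T : orderType disp) (key : 'I_n -> T).
Implicit Types (S : {set 'I_n}) (r : 'I_m) (u v : 'I_n).

Definition dominated (S : {set 'I_n}) (r : 'I_m) (u : 'I_n) : bool :=
  [exists v in right_nbhd A r :&: S, (key u < key v)%O].

Definition dom_deg (S : {set 'I_n}) (u : 'I_n) : nat :=
  #|[set r in left_nbhd A u | dominated S r u]|.

Lemma dominated_setD1 S r u v :
  ~~ (key u < key v)%O -> dominated (S :\ v) r u = dominated S r u.
Proof.
move=> u_nlt_v; apply/existsP/existsP => -[w /andP[wN u_lt_w]]; exists w.
  by rewrite u_lt_w andbT; move: wN; rewrite !finset.in_setI in_setD1 => /and3P[-> _ ->].
rewrite u_lt_w andbT; move: wN; rewrite !finset.in_setI in_setD1 => /andP[-> ->].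
by rewrite andbT; apply: contraNneq u_nlt_v => <-.
Qed.

Lemma dom_deg_setD1 S u v :
  ~~ (key u < key v)%O -> dom_deg (S :\ v) u = dom_deg S u.
Proof.
by move=> u_nlt_v; apply: eq_card => r; rewrite !inE dominated_setD1.
Qed.

Lemma unique_nbr_not_dominated S r u :
  r \in unique_nbrs A S -> u \in right_nbhd A r :&: S -> ~~ dominated S r u.
Proof.
rewrite inE => /cards1P[z Nr_z] uN; apply/existsP => -[w /andP[wN u_lt_w]].
by move: uN wN u_lt_w; rewrite Nr_z !inE => /eqP-> /eqP->; rewrite ltxx.
Qed.

Lemma sum_card_unique_nbrs S :
  (\sum_(u in S) #|[set r in left_nbhd A u | r \in unique_nbrs A S]|
     = #|unique_nbrs A S|)%N.
Proof.
transitivity (\sum_(u in S) \sum_(r in unique_nbrs A S | u \in right_nbhd A r) 1)%N.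
  by apply: eq_bigr => u _; rewrite -sum1_card; apply: eq_bigl => r; rewrite !inE andbC.
rewrite (exchange_big_dep (mem (unique_nbrs A S))) /=; last by move=> u r _ /andP[].
rewrite -sum1_card; apply: eq_bigr => r; rewrite inE => /eqP N1.
by rewrite -[RHS]N1 -[RHS]sum1_card; apply: eq_bigl => u; rewrite N1 !inE andbC.
Qed.

Variable t : nat.
Hypothesis regA : left_regular A t.

Lemma sum_dom_deg_add_unique_le S :
  (\sum_(u in S) dom_deg S u + #|unique_nbrs A S| <= t * #|S|)%N.
Proof.
rewrite -sum_card_unique_nbrs -big_split mulnC -sum_nat_const /=.
apply: leq_sum => u uS.
rewrite -(regA u) -(cardsID [set r | dominated S r u] (left_nbhd A u)).
apply: leq_add; apply: subset_leq_card; apply/fintype.subsetP => r; rewrite !inE.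
  by case/andP => -> ->.
case/andP => Aru r_unique; rewrite Aru andbT.
by apply: unique_nbr_not_dominated; rewrite !inE ?Aru ?uS ?r_unique.
Qed.

Section WeightedCount.
Variables (F : realFieldType) (mu : F).

Lemma sum_dom_deg_le S :
  t%:R * (1 - mu) * #|S|%:R <= #|unique_nbrs A S|%:R ->
  \sum_(u in S) (dom_deg S u)%:R <= mu * t%:R * #|S|%:R.
Proof.
move=> expS; have := sum_dom_deg_add_unique_le S.
rewrite -(ler_nat F) natrD natrM -natr_sum; lra.
Qed.

Lemma weighted_dom_deg_le S (w : 'I_n -> F) :
  (forall S', S' \subset S -> t%:R * (1 - mu) * #|S'|%:R <= #|unique_nbrs A S'|%:R) ->
  {in S, forall u, 0 <= w u} ->
  {in S &, {homo w : u v / (key u <= key v)%O >-> u <= v}} ->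
  \sum_(u in S) (dom_deg S u)%:R * w u <= mu * t%:R * \sum_(u in S) w u.
Proof.
elim: {S}_.+1 {-2}S (ltnSn #|S|) w => // k IH S cardS w expS w_ge0 w_homo.
have [->|[u0 u0S]] := set_0Vmem S; first by rewrite !big_set0 mulr0.
pose v := [arg min_(u < u0 in S) key u]%O.
have [vS v_min] : v \in S /\ {in S, forall u, (key v <= key u)%O}.
  by rewrite /v; case: arg_minP.
have shift (c : 'I_n -> F) : \sum_(u in S) c u * w u
    = (\sum_(u in S) c u) * w v + \sum_(u in S :\ v) c u * (w u - w v).
  rewrite [X in _ = _ + X](_ : _ = \sum_(u in S) c u * (w u - w v)).
    by rewrite mulr_suml -big_split; apply: eq_bigr => u _; rewrite /= -mulrDr subrKC.
  by rewrite [RHS](big_setD1 v vS) /= subrr mulr0 add0r.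
have IHv := IH (S :\ v) _ (fun u => w u - w v).
rewrite -(eq_bigr _ (fun u _ => mul1r (w u))) !shift sumr_const.
rewrite [X in _ <= _ * (_ + X)](eq_bigr _ (fun u _ => mul1r _)) mulrDr.
apply: lerD; first by rewrite mulrA ler_wpM2r ?w_ge0 ?sum_dom_deg_le ?expS.
rewrite [X in X <= _](eq_bigr (fun u => (dom_deg (S :\ v) u)%:R * (w u - w v))); last first.
  by move=> u /setD1P[_ uS]; rewrite dom_deg_setD1 // -leNgt v_min.
apply: IHv.
- by move: cardS; rewrite (cardsD1 v S) vS.
- by move=> S' S'_sub; apply/expS/(fintype.subset_trans S'_sub)/subD1set.
- by move=> u /setD1P[_ uS]; rewrite subr_ge0 w_homo ?v_min.
- by move=> u u' /setD1P[_ uS] /setD1P[_ u'S] /w_homo le_w; rewrite lerD2r le_w.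
Qed.

End WeightedCount.
End Domination.

Lemma exchange_sum_sets (V : pzSemiRingType) (I J : finType) (X : I -> {set J}) (w : J -> V) :
  \sum_(i : I) \sum_(j in X i) w j = \sum_(j : J) #|[set i | j \in X i]|%:R * w j.
Proof.
rewrite (exchange_big_dep xpredT) //=; apply: eq_bigr => j _.
by rewrite mulr_natl -sumr_const; apply: eq_bigl => i; rewrite inE.
Qed.

Lemma norm_sign_entry (R : numDomainType) m n (A : 'M[R]_(m, n)) r u :
  sign_matrix A -> A r u != 0 -> `|A r u| = 1.
Proof.
by move=> signA; case: (signA r u) => [->|[]->]; rewrite ?eqxx ?normrN ?normr1.
Qed.

Section RowSplit.
Variables (R : realType) (m n : nat) (A : 'M[R]_(m, n)).
Hypothesis signA : sign_matrix A.
Variables (disp : Order.disp_t) (T : orderType disp) (key : 'I_n -> T).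
Hypothesis key_inj : injective key.
Variables (S : {set 'I_n}) (x : 'cV[R]_n).
Hypothesis x_supp : forall u, u \notin S -> x u 0 = 0.
Implicit Type r : 'I_m.

Definition lead_nbrs r := [set u in right_nbhd A r :&: S | ~~ dominated A key S r u].
Definition dom_nbrs r := [set u in right_nbhd A r :&: S | dominated A key S r u].
Definition lead_part r := \sum_(u in lead_nbrs r) A r u * x u 0.
Definition dom_part r := \sum_(u in dom_nbrs r) A r u * x u 0.

Lemma mulmx_lead_dom r : (A *m x) r 0 = lead_part r + dom_part r.
Proof.
rewrite mxE (bigID (mem (right_nbhd A r :&: S))) /= [X in _ + X]big1 ?addr0; last first.
  move=> u; rewrite !inE negb_and negbK => /orP[/eqP->|/x_supp->];
  by rewrite ?mul0r ?mulr0.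
rewrite (bigID (dominated A key S r)) /= addrC.
by congr (_ + _); apply: eq_bigl => u; rewrite !inE.
Qed.

Lemma card_lead_nbrs_le1 r : (#|lead_nbrs r| <= 1)%N.
Proof.
apply/card_le1P => u u_lead v; apply/idP/eqP => [v_lead|->//].
move: u_lead v_lead; rewrite /lead_nbrs => /setIdP[uN u_max] /setIdP[vN v_max].
apply/key_inj/eqP; rewrite eq_le !leNgt; apply/andP; split.
  by apply: contra u_max => u_lt_v; apply/existsP; exists v; rewrite vN u_lt_v.
by apply: contra v_max => v_lt_u; apply/existsP; exists u; rewrite uN v_lt_u.
Qed.

Lemma card_dom_nbrs_le r : (#|dom_nbrs r| <= (smax A).-1)%N.
Proof.
set N := right_nbhd A r :&: S.
have [N0|[u0 u0N]] := set_0Vmem N.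
  have : dom_nbrs r \subset N by apply/fintype.subsetP => u; rewrite inE => /andP[].
  by rewrite N0 finset.subset0 => /eqP->; rewrite cards0.
pose l := [arg max_(u > u0 in N) key u]%O.
have [lN l_max] : l \in N /\ {in N, forall u, (key u <= key l)%O}.
  by rewrite /l; case: arg_maxP.
have dom_sub : dom_nbrs r \subset N :\ l.
  apply/fintype.subsetP => u; rewrite !inE -/N => /andP[uN /existsP[v /andP[vN u_lt_v]]].
  rewrite uN andbT; apply: contraTneq u_lt_v => ->; by rewrite -leNgt l_max.
apply: leq_trans (subset_leq_card dom_sub) _.
have -> : #|N :\ l| = #|N|.-1 by rewrite (cardsD1 l N) lN.
rewrite -!subn1 leq_sub2r //.
apply: leq_trans (leq_bigmax r); exact/subset_leq_card/subsetIl.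
Qed.

Variable p : R.
Hypothesis p_ge1 : 1 <= p.
Let p_neq0 : p != 0 := lt0r_neq0 (lt_le_trans ltr01 p_ge1).

Lemma pow_lead_part r : `|lead_part r| `^ p = \sum_(u in lead_nbrs r) `|x u 0| `^ p.
Proof.
have := card_lead_nbrs_le1 r; rewrite leq_eqVlt ltnS leqn0.
case/orP => [/cards1P[l lead_l]|/eqP/cards0_eq lead0]; last first.
  by rewrite /lead_part lead0 !big_set0 normr0 powR0.
have : l \in lead_nbrs r by rewrite lead_l set11.
rewrite !inE => /andP[/andP[Arl _] _].
by rewrite /lead_part lead_l !big_set1 normrM norm_sign_entry ?mul1r.
Qed.

Lemma pow_dom_part_le r :
  `|dom_part r| `^ p <= (smax A).-1%:R `^ (p - 1) * \sum_(u in dom_nbrs r) `|x u 0| `^ p.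
Proof.
rewrite /dom_part -big_enum; apply: le_trans (powR_norm_sum_le p_ge1 _ _) _.
rewrite -cardE big_enum.
rewrite (eq_bigr (fun u => `|x u 0| `^ p)); last first.
  by move=> u; rewrite !inE => /andP[/andP[Aru _] _]; rewrite normrM norm_sign_entry ?mul1r.
rewrite ler_wpM2r ?sumr_ge0 //.
by apply: ge0_ler_powR; rewrite ?nnegrE ?ler_nat ?card_dom_nbrs_le // subr_ge0.
Qed.

Lemma sum_supportE (F : 'I_n -> R) :
  (forall u, x u 0 = 0 -> F u = 0) -> \sum_u F u = \sum_(u in S) F u.
Proof.
move=> F0; rewrite (bigID (mem S)) /= [X in _ + X]big1 ?addr0 //.
by move=> u /x_supp /F0.
Qed.

Lemma lp_pow_support : lp_pow p x = \sum_(u in S) `|x u 0| `^ p.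
Proof. by apply: sum_supportE => u ->; rewrite normr0 powR0. Qed.

Variable t : nat.
Hypothesis regA : left_regular A t.

Lemma card_rows_dom u : u \in S -> #|[set r | u \in dom_nbrs r]| = dom_deg A key S u.
Proof. by move=> uS; apply: eq_card => r; rewrite !inE uS andbT. Qed.

Lemma card_rows_lead u : u \in S ->
  (#|[set r | u \in lead_nbrs r]| + dom_deg A key S u)%N = t.
Proof.
move=> uS; rewrite addnC -(regA u) -(cardsID [set r | dominated A key S r u] (left_nbhd A u)).
by congr (_ + _); apply: eq_card => r; rewrite !inE ?uS ?andbT // andbC.
Qed.

Definition dom_weight := \sum_(u in S) (dom_deg A key S u)%:R * `|x u 0| `^ p.

Lemma sum_dom_nbrs_weight :
  \sum_r \sum_(u in dom_nbrs r) `|x u 0| `^ p = dom_weight.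
Proof.
rewrite exchange_sum_sets sum_supportE => [|u ->]; last by rewrite normr0 powR0 ?mulr0.
by apply: eq_bigr => u uS; rewrite card_rows_dom.
Qed.

Lemma sum_lead_nbrs_weight :
  \sum_r \sum_(u in lead_nbrs r) `|x u 0| `^ p = t%:R * lp_pow p x - dom_weight.
Proof.
rewrite exchange_sum_sets sum_supportE => [|u ->]; last by rewrite normr0 powR0 ?mulr0.
rewrite lp_pow_support mulr_sumr /dom_weight -sumrB.
by apply: eq_bigr => u uS; rewrite -(card_rows_lead uS) natrD mulrDl addrK.
Qed.

Lemma lp_pow_mulmx_ge_weight d : 0 < d ->
  (t%:R * lp_pow p x - dom_weight) / (1 + d) `^ (p - 1)
    - (smax A).-1%:R `^ (p - 1) * dom_weight / d `^ (p - 1) <= lp_pow p (A *m x).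
Proof.
move=> d_gt0; rewrite -sum_lead_nbrs_weight -sum_dom_nbrs_weight.
rewrite mulr_sumr !mulr_suml -sumrB /lp_pow; apply: ler_sum => r _.
rewrite mulmx_lead_dom -pow_lead_part; apply: le_trans (powR_normD_ge p_ge1 _ _ d_gt0).
by rewrite lerD2l lerN2 ler_wpM2r ?invr_ge0 ?powR_ge0 ?pow_dom_part_le.
Qed.

Lemma lp_pow_mulmx_le_weight d : 0 < d < 1 ->
  lp_pow p (A *m x) <= (t%:R * lp_pow p x - dom_weight) / (1 - d) `^ (p - 1)
    + (smax A).-1%:R `^ (p - 1) * dom_weight / d `^ (p - 1).
Proof.
move=> d_01; rewrite -sum_lead_nbrs_weight -sum_dom_nbrs_weight.
rewrite mulr_sumr !mulr_suml -big_split /lp_pow; apply: ler_sum => r _.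
rewrite mulmx_lead_dom -pow_lead_part; apply: le_trans (powR_normD_le p_ge1 _ _ d_01) _.
by rewrite lerD2l ler_wpM2r ?invr_ge0 ?powR_ge0 ?pow_dom_part_le.
Qed.

Variable mu : R.
Hypothesis expS : forall S' : {set 'I_n}, S' \subset S ->
  t%:R * (1 - mu) * #|S'|%:R <= #|unique_nbrs A S'|%:R.
Hypothesis key_mono :
  {in S &, {homo (fun u => `|x u 0|) : u v / (key u <= key v)%O >-> u <= v}}.

Lemma dom_weight_le : dom_weight <= mu * t%:R * lp_pow p x.
Proof.
rewrite lp_pow_support; apply: (weighted_dom_deg_le regA expS) => [u _|u v uS vS le_uv].
  exact: powR_ge0.
by apply: ge0_ler_powR; rewrite ?nnegrE ?key_mono ?(le_trans ler01 p_ge1).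
Qed.

Lemma lp_pow_mulmx_ge d : 0 < d ->
  (t%:R * (1 - mu) / (1 + d) `^ (p - 1)
     - mu * t%:R / d `^ (p - 1) * (smax A).-1%:R `^ (p - 1)) * lp_pow p x
    <= lp_pow p (A *m x).
Proof.
move=> d_gt0; apply: le_trans (lp_pow_mulmx_ge_weight d_gt0).
set K := (smax A).-1%:R `^ (p - 1).
set a := ((1 + d) `^ (p - 1))^-1; set b := (d `^ (p - 1))^-1.
have a_ge0 : 0 <= a by rewrite invr_ge0 powR_ge0.
have b_ge0 : 0 <= b by rewrite invr_ge0 powR_ge0.
have : 0 <= (mu * t%:R * lp_pow p x - dom_weight) * (a + K * b).
  by rewrite mulr_ge0 ?subr_ge0 ?dom_weight_le ?addr_ge0 ?mulr_ge0 ?powR_ge0.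
lra.
Qed.

Lemma lp_pow_mulmx_le d : 0 < d < 1 ->
  lp_pow p (A *m x)
    <= (t%:R / (1 - d) `^ (p - 1)
          + mu * t%:R / d `^ (p - 1) * (smax A).-1%:R `^ (p - 1)) * lp_pow p x.
Proof.
move=> d_01; apply: le_trans (lp_pow_mulmx_le_weight d_01) _.
set K := (smax A).-1%:R `^ (p - 1).
set a := ((1 - d) `^ (p - 1))^-1; set b := (d `^ (p - 1))^-1.
have a_ge0 : 0 <= a by rewrite invr_ge0 powR_ge0.
have b_ge0 : 0 <= b by rewrite invr_ge0 powR_ge0.
have dom_weight_ge0 : 0 <= dom_weight by apply: sumr_ge0 => u _; rewrite mulr_ge0 ?powR_ge0.
have : 0 <= dom_weight * a + K * b * (mu * t%:R * lp_pow p x - dom_weight).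
  by rewrite addr_ge0 ?mulr_ge0 ?subr_ge0 ?dom_weight_le ?powR_ge0.
lra.
Qed.

End RowSplit.

Theorem lemma6p1 (R : realType) (m n t : nat) (gamma mu : R) (A : 'M[R]_(m, n)) :
  sign_matrix A ->
  unique_expander A t gamma mu ->
  forall (p d1 d2 : R), 1 <= p -> 0 < d1 -> 0 < d2 < 1 ->
  forall x : 'cV[R]_n, sparse (gamma * n%:R) x ->
    ((t%:R * (1 - mu) / ((1 + d1) `^ (p - 1))
       - mu * t%:R / (d1 `^ (p - 1)) * ((smax A).-1%:R `^ (p - 1))) * lp_pow p x
       <= lp_pow p (A *m x))
    /\
    (lp_pow p (A *m x)
       <= (t%:R / ((1 - d2) `^ (p - 1))
           + mu * t%:R / (d2 `^ (p - 1)) * ((smax A).-1%:R `^ (p - 1))) * lp_pow p x).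
Proof.
move=> signA [regA expA] p d1 d2 p_ge1 d1_gt0 d2_01 x x_sparse.
pose S := [set u | x u 0 != 0].
(* Breaking ties by index makes the leading neighbour of each row unique. *)
pose key u : R *l nat := (`|x u 0|, val u).
have key_inj : injective key by move=> u v [_ /val_inj].
have key_mono :
    {in S &, {homo (fun u => `|x u 0|) : u v / (key u <= key v)%O >-> u <= v}}.
  by move=> u v _ _; rewrite lexi_pair => /andP[].
have x_supp u : u \notin S -> x u 0 = 0 by rewrite inE negbK => /eqP.
have expS (S' : {set 'I_n}) :
    S' \subset S -> t%:R * (1 - mu) * #|S'|%:R <= #|unique_nbrs A S'|%:R.
  by move=> S'_sub; apply/expA/(le_trans _ x_sparse); rewrite ler_nat subset_leq_card.
split.
  exact: (lp_pow_mulmx_ge signA key_inj x_supp p_ge1 regA expS key_mono).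
exact: (lp_pow_mulmx_le signA key_inj x_supp p_ge1 regA expS key_mono).
Qed.
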